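(* Let $\mathcal{H}$ be a finite-dimensional Hilbert space, let $P, Q$ be orthogonal projectors on $\mathcal{H}$, and define $$f(P,Q) := \min_{\tilde P \in \mathrm{Proj}(\mathcal{H})}\|PQP - \tilde P\|.$$ Then $\|[P,Q]\| = \sqrt{f(P,Q) - f(P,Q)^2}$.
   Context: $\mathrm{Proj}(\mathcal{H})$ is the set of orthogonal projectors on $\mathcal{H}$, $\|\cdot\|$ the operator norm, $[P,Q] = PQ - QP$. *)

From mathcomp Require Import all_boot all_order all_algebra.
From mathcomp Require Import classical_sets reals.
From mathcomp.real_closed Require Import complex.
Set Implicit Arguments. Unset Strict Implicit. Unset Printing Implicit Defensive.
Import Order.TTheory GRing.Theory Num.Theory.
Local Open Scope ring_scope.
Local Open Scope classical_set_scope.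

Section Defs.
Variable R : realType.
Variable n : nat.

Definition vnorm (v : 'cV[R[i]]_n) : R :=
  Num.sqrt (\sum_(i < n) ((complex.Re (v i 0)) ^+ 2 + (complex.Im (v i 0)) ^+ 2)).

Definition opnorm (A : 'M[R[i]]_n) : R :=
  sup [set vnorm (A *m v) | v in [set v : 'cV[R[i]]_n | vnorm v <= 1]].

Definition adjoint (A : 'M[R[i]]_n) : 'M[R[i]]_n := (map_mx (@conjc R) A)^T.

Definition is_proj (P : 'M[R[i]]_n) : Prop := P *m P = P /\ adjoint P = P.

Definition commutator (P Q : 'M[R[i]]_n) : 'M[R[i]]_n := P *m Q - Q *m P.

(* f(P,Q) = min over orthogonal projectors Pt of ||PQP - Pt||
   (the minimum is attained by compactness, so it equals the infimum) *)
Definition fPQ (P Q : 'M[R[i]]_n) : R :=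
  inf [set opnorm (P *m Q *m P - Pt) | Pt in [set Pt | is_proj Pt]].
End Defs.

(* Let A := P Q P = (Q P)^* (Q P).  Diagonalizing this Gram matrix in an
   orthonormal basis (x_j) gives A x_j = l_j x_j with l_j = |Q P x_j|^2.  The
   corner T := (1 - P) Q P satisfies T^* T = A - A^2, hence 0 <= l_j <= 1 and
   |T|^2 = max_j (l_j - l_j^2).  Moreover [P, Q] = T^* - T, and since T^2 = 0
   the sum [P, Q] v = T^* (1 - P) v - T P v is orthogonal, so |[P, Q]| = |T|.
   On the other side, let d(l) := min(l, 1 - l).  Rounding every l_j to the
   nearest point of {0, 1} gives a projector at distance max_j d(l_j) from A,
   and no projector Pt is closer, because
   (A - Pt) x_j = l_j (1 - Pt) x_j - (1 - l_j) Pt x_j is an orthogonal sum of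
   norm at least d(l_j).  Finally d(l) - d(l)^2 = l - l^2 and t - t^2 increases
   on [0, 1/2], so f := max_j d(l_j) satisfies f - f^2 = |[P, Q]|^2. *)

From mathcomp Require Import all_boot all_order all_algebra.
From mathcomp Require Import classical_sets reals.
From mathcomp.real_closed Require Import complex.
From mathcomp Require Import ring lra.
Set Implicit Arguments. Unset Strict Implicit. Unset Printing Implicit Defensive.
Import Order.TTheory GRing.Theory Num.Theory.
Local Open Scope ring_scope.
Local Open Scope sesquilinear_scope.
Local Open Scope complex_scope.

Section ConjugateTranspose.
Variable R : realType.
Local Notation C := R[i].

Lemma trmxC_mul m p q (A : 'M[C]_(m, p)) (B : 'M[C]_(p, q)) :
  (A *m B)^t* = B^t* *m A^t*.
Proof. by rewrite trmx_mul map_mxM. Qed.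

Lemma trmxCB m p (A B : 'M[C]_(m, p)) : (A - B)^t* = A^t* - B^t*.
Proof. by rewrite linearB map_mxB. Qed.

Lemma trmxCD m p (A B : 'M[C]_(m, p)) : (A + B)^t* = A^t* + B^t*.
Proof. by rewrite linearD map_mxD. Qed.

Lemma trmxC1 m : (1%:M : 'M[C]_m)^t* = 1%:M.
Proof. by rewrite trmx1 map_mx1. Qed.

Lemma adjointE n (A : 'M[C]_n) : adjoint A = A^t*.
Proof. by rewrite /adjoint map_trmx. Qed.

End ConjugateTranspose.

Section InnerProduct.
Variables (R : realType) (n : nat).
Local Notation C := R[i].
Implicit Types (u v w : 'cV[C]_n).

Definition cnorm2 (z : C) : R := complex.Re z ^+ 2 + complex.Im z ^+ 2.

Definition vnorm2 v : R := \sum_j cnorm2 (v j 0).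

Definition dotc u v : C := (u^t* *m v) 0 0.

Lemma cnorm2E (z : C) : (cnorm2 z)%:C = z^* * z.
Proof. by rewrite add_Re2_Im2 sqr_normc mulrC. Qed.

Lemma cnorm2_ge0 (z : C) : 0 <= cnorm2 z.
Proof. by rewrite addr_ge0 ?sqr_ge0. Qed.

Lemma vnormE v : vnorm v = Num.sqrt (vnorm2 v).
Proof. by []. Qed.

Lemma vnorm2E v : (vnorm2 v)%:C = dotc v v.
Proof.
rewrite /dotc mxE rmorph_sum; apply: eq_bigr => j _.
rewrite !mxE; exact: cnorm2E.
Qed.

Lemma vnorm2_ge0 v : 0 <= vnorm2 v.
Proof. by rewrite sumr_ge0 // => j _; apply: cnorm2_ge0. Qed.

Lemma vnorm2_0 : vnorm2 0 = 0.
Proof. by rewrite /vnorm2 big1 // => j _; rewrite mxE /cnorm2 /=; ring. Qed.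

Lemma vnorm2_eq0 v : vnorm2 v = 0 -> v = 0.
Proof.
move=> /eqP; rewrite psumr_eq0 => [/allP v0|j _]; last exact: cnorm2_ge0.
apply/matrixP => j k; rewrite ord1 mxE.
move: (v0 j (mem_index_enum j)); rewrite /cnorm2 paddr_eq0 ?sqr_ge0 // !sqrf_eq0.
by case/andP => /eqP Re0 /eqP Im0; rewrite [v j 0]complexE Re0 Im0 mulr0 addr0.
Qed.

Lemma dotc_mulmx u v (A : 'M[C]_n) : dotc u (A *m v) = dotc (A^t* *m u) v.
Proof. by rewrite /dotc trmxC_mul trmxCK mulmxA. Qed.

Lemma dotc_mulmxl u v (A : 'M[C]_n) : dotc (A *m u) v = dotc u (A^t* *m v).
Proof. by rewrite dotc_mulmx trmxCK. Qed.

Lemma dotcC u v : dotc v u = (dotc u v)^*.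
Proof.
rewrite /dotc; have -> : v^t* *m u = (u^t* *m v)^t* by rewrite trmxC_mul trmxCK.
by rewrite !mxE.
Qed.

Lemma dotc0r u : dotc u 0 = 0.
Proof. by rewrite /dotc mulmx0 mxE. Qed.

Lemma dotcZl_real u v (c : R) : dotc (c%:C *: u) v = c%:C * dotc u v.
Proof.
rewrite /dotc linearZ map_mxZ -scalemxAl mxE; congr (_ * _); exact: conjc_real.
Qed.

Lemma dotcZr u v (a : C) : dotc u (a *: v) = a * dotc u v.
Proof. by rewrite /dotc -scalemxAr mxE. Qed.

Lemma dotcDl u v w : dotc (u + v) w = dotc u w + dotc v w.
Proof. by rewrite /dotc trmxCD mulmxDl [LHS]mxE. Qed.

Lemma dotcDr u v w : dotc u (v + w) = dotc u v + dotc u w.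
Proof. by rewrite /dotc mulmxDr [LHS]mxE. Qed.

Lemma dotcBl u v w : dotc (u - v) w = dotc u w - dotc v w.
Proof. by rewrite /dotc trmxCB mulmxBl [LHS]mxE [X in _ + X]mxE. Qed.

Lemma dotcBr u v w : dotc u (v - w) = dotc u v - dotc u w.
Proof. by rewrite /dotc mulmxBr [LHS]mxE [X in _ + X]mxE. Qed.

Lemma vnorm2D_orth u v : dotc u v = 0 -> vnorm2 (u + v) = vnorm2 u + vnorm2 v.
Proof.
move=> uv; apply: complexI; rewrite vnorm2E dotcDl !dotcDr -!vnorm2E.
by rewrite (dotcC u v) uv conjc0 addr0 add0r rmorphD.
Qed.

Lemma vnorm2B_real u v (r : R) : dotc u v = r%:C ->
  vnorm2 (u - v) = vnorm2 u + vnorm2 v - 2 * r.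
Proof.
move=> uv; apply: complexI; rewrite vnorm2E dotcBl !dotcBr -!vnorm2E.
rewrite (dotcC u v) uv conjc_real !rmorphB rmorphD rmorphM /= [(2 : R)%:C]rmorph_nat.
by ring.
Qed.

Lemma vnorm2B_orth u v : dotc u v = 0 -> vnorm2 (u - v) = vnorm2 u + vnorm2 v.
Proof. by move=> uv; rewrite (vnorm2B_real (r := 0)) ?mulr0 ?subr0. Qed.

Lemma vnorm2Z (c : R) v : vnorm2 (c%:C *: v) = c ^+ 2 * vnorm2 v.
Proof.
rewrite /vnorm2 mulr_sumr; apply: eq_bigr => j _.
by rewrite /cnorm2 mxE; case: (v j 0) => a b /=; ring.
Qed.

End InnerProduct.

Section Projectors.
Variables (R : realType) (n : nat).
Local Notation C := R[i].
Implicit Types (P : 'M[C]_n) (v : 'cV[C]_n).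

Lemma proj_trmxC P : is_proj P -> P^t* = P.
Proof. by case=> _; rewrite adjointE. Qed.

Lemma proj_mulmx_compl P : is_proj P -> P *m (1%:M - P) = 0.
Proof. by case=> PP _; rewrite mulmxBr mulmx1 PP subrr. Qed.

Lemma compl_mulmx_proj P : is_proj P -> (1%:M - P) *m P = 0.
Proof. by case=> PP _; rewrite mulmxBl mul1mx PP subrr. Qed.

Lemma proj_compl P : is_proj P -> is_proj (1%:M - P).
Proof.
move=> P_proj; split; last by rewrite adjointE trmxCB trmxC1 proj_trmxC.
by rewrite mulmxBl mul1mx proj_mulmx_compl // subr0.
Qed.

Lemma vnorm2_proj_split P v : is_proj P ->
  vnorm2 v = vnorm2 (P *m v) + vnorm2 ((1%:M - P) *m v).
Proof.
move=> P_proj; have {1}-> : v = P *m v + (1%:M - P) *m v.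
  by rewrite -mulmxDl addrC subrK mul1mx.
rewrite vnorm2D_orth //.
by rewrite dotc_mulmxl proj_trmxC // mulmxA proj_mulmx_compl // mul0mx dotc0r.
Qed.

End Projectors.

Section UnitaryDiagonal.
Variables (R : realType) (n : nat).
Local Notation C := R[i].
Variable U : 'M[C]_n.
Hypothesis U_unitary : U \is unitarymx.
Implicit Types (c d : 'I_n -> R) (v : 'cV[C]_n).

Definition udiag c : 'M[C]_n := U^t* *m diag_mx (\row_j (c j)%:C) *m U.

Definition ubasis j : 'cV[C]_n := U^t* *m delta_mx j 0.

Lemma unitary_mulmxC : U *m U^t* = 1%:M.
Proof. exact/unitarymxP. Qed.

Lemma unitary_trmxC_mulmx : U^t* *m U = 1%:M.
Proof. exact: mulmx1C unitary_mulmxC. Qed.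

Lemma eq_udiag c d : c =1 d -> udiag c = udiag d.
Proof.
move=> cd; rewrite /udiag; have -> // : \row_j (c j)%:C = \row_j (d j)%:C :> 'rV[C]_n.
by apply/rowP => j; rewrite !mxE cd.
Qed.

Lemma udiag_mul c d : udiag c *m udiag d = udiag (fun j => c j * d j).
Proof.
rewrite /udiag !mulmxA -[_ *m U *m U^t*]mulmxA unitary_mulmxC mulmx1.
rewrite -[_ *m diag_mx _ *m diag_mx _]mulmxA mulmx_diag.
have -> // : \row_j ((\row_j (c j)%:C) 0 j * (\row_j (d j)%:C) 0 j) =
             \row_j (c j * d j)%:C :> 'rV[C]_n.
by apply/rowP => j; rewrite !mxE rmorphM.
Qed.

Lemma udiagB c d : udiag c - udiag d = udiag (fun j => c j - d j).
Proof.
rewrite /udiag -mulmxBl -mulmxBr -linearB /=.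
have -> // : \row_j (c j)%:C - \row_j (d j)%:C = \row_j (c j - d j)%:C :> 'rV[C]_n.
by apply/rowP => j; rewrite !mxE rmorphB.
Qed.

Lemma trmxC_udiag c : (udiag c)^t* = udiag c.
Proof.
rewrite /udiag !trmxC_mul trmxCK mulmxA; congr (_ *m _ *m _).
apply/matrixP => i j; rewrite !mxE; case: eqVneq => [->|_]; last by rewrite !mulr0n rmorph0.
by rewrite !mulr1n; apply: conjc_real.
Qed.

Lemma is_proj_udiag c : (forall j, c j * c j = c j) -> is_proj (udiag c).
Proof.
move=> c_idem; split; last by rewrite adjointE trmxC_udiag.
by rewrite udiag_mul; apply: eq_udiag.
Qed.

Lemma vnorm2_unitary v : vnorm2 (U *m v) = vnorm2 v.
Proof.
by apply: complexI; rewrite !vnorm2E dotc_mulmx mulmxA unitary_trmxC_mulmx mul1mx.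
Qed.

Lemma vnorm2_ubasis j : vnorm2 (ubasis j) = 1.
Proof.
have -> : vnorm2 (ubasis j) = vnorm2 (delta_mx j 0).
  apply: complexI; rewrite !vnorm2E /ubasis dotc_mulmx trmxCK mulmxA.
  by rewrite unitary_mulmxC mul1mx.
rewrite /vnorm2 (bigD1 j) //= big1 => [|k /negbTE kj]; rewrite mxE ?kj ?eqxx /cnorm2 /=; ring.
Qed.

Lemma unitary_diag_ubasis (D : 'rV[C]_n) j :
  (U^t* *m diag_mx D *m U) *m ubasis j = D 0 j *: ubasis j.
Proof.
rewrite /ubasis !mulmxA -[_ *m U *m U^t*]mulmxA unitary_mulmxC mulmx1 -mulmxA.
have -> : diag_mx D *m delta_mx j 0 = D 0 j *: (delta_mx j 0 : 'cV[C]_n).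
  apply/matrixP => a b; rewrite mul_diag_mx !mxE.
  by case: eqVneq => [->|]; rewrite ?mulr1 ?mulr0.
by rewrite scalemxAr.
Qed.

Lemma udiag_ubasis c j : udiag c *m ubasis j = (c j)%:C *: ubasis j.
Proof. by rewrite unitary_diag_ubasis mxE. Qed.

Lemma dotc_udiag c v :
  dotc v (udiag c *m v) = (\sum_j c j * cnorm2 ((U *m v) j 0))%:C.
Proof.
rewrite /udiag -!mulmxA dotc_mulmx trmxCK /dotc mxE rmorph_sum.
apply: eq_bigr => j _; rewrite mul_diag_mx [X in _ * X]mxE [(\row__ _) 0 j]mxE.
by rewrite rmorphM /= cnorm2E mulrCA !mxE.
Qed.

Lemma vnorm2_gram_le (T : 'M[C]_n) c K v : T^t* *m T = udiag c ->
  (forall j, c j <= K) -> vnorm2 (T *m v) <= K * vnorm2 v.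
Proof.
move=> gramT cK; have : (vnorm2 (T *m v))%:C = dotc v (udiag c *m v).
  by rewrite vnorm2E dotc_mulmxl mulmxA gramT.
rewrite dotc_udiag => /complexI ->; rewrite -(vnorm2_unitary v) /vnorm2 mulr_sumr.
by apply: ler_sum => j _; rewrite ler_wpM2r ?cnorm2_ge0.
Qed.

Lemma vnorm2_gram_ubasis (T : 'M[C]_n) c j : T^t* *m T = udiag c ->
  vnorm2 (T *m ubasis j) = c j.
Proof.
move=> gramT; apply: complexI.
rewrite vnorm2E dotc_mulmxl mulmxA gramT udiag_ubasis dotcZr -vnorm2E.
by rewrite vnorm2_ubasis mulr1.
Qed.

End UnitaryDiagonal.

Section Gram.
Variables (R : realType) (n : nat).
Local Notation C := R[i].
Implicit Types (B : 'M[C]_n) (v : 'cV[C]_n).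

Definition gram_basis B := spectralmx (B^t* *m B).

Definition gram_eigval B j := vnorm2 (B *m ubasis (gram_basis B) j).

Lemma gram_basis_unitary B : gram_basis B \is unitarymx.
Proof. exact: spectral_unitarymx. Qed.

Lemma gram_spectral B : B^t* *m B =
  (gram_basis B)^t* *m diag_mx (spectral_diag (B^t* *m B)) *m gram_basis B.
Proof.
rewrite -invmx_unitary; last exact: gram_basis_unitary.
by apply/orthomx_spectralP/normalmxP; rewrite trmxC_mul trmxCK.
Qed.

Lemma gram_udiag B : B^t* *m B = udiag (gram_basis B) (gram_eigval B).
Proof.
have S_unitary := gram_basis_unitary B.
rewrite [LHS]gram_spectral /udiag; congr (_ *m diag_mx _ *m _); apply/rowP => j.
have Gx := unitary_diag_ubasis S_unitary (spectral_diag (B^t* *m B)) j.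
rewrite -gram_spectral in Gx.
have := congr1 (dotc (ubasis (gram_basis B) j)) Gx.
rewrite dotcZr -vnorm2E vnorm2_ubasis // mulr1 => <-.
by rewrite mxE -mulmxA -dotc_mulmxl -vnorm2E.
Qed.

Lemma vnorm2_mulmx_le B v :
  vnorm2 (B *m v) <= (\sum_j gram_eigval B j) * vnorm2 v.
Proof.
apply: (vnorm2_gram_le (gram_basis_unitary B) v (gram_udiag B)) => j.
by rewrite (bigD1 j) //= lerDl sumr_ge0 // => k _; apply: vnorm2_ge0.
Qed.

End Gram.

Section OperatorNorm.
Variables (R : realType) (n : nat).
Local Notation C := R[i].
Implicit Types (B : 'M[C]_n) (v x : 'cV[C]_n).

Lemma vnorm_le1 v : (vnorm v <= 1) = (vnorm2 v <= 1).
Proof. by rewrite vnormE -[X in _ <= X]sqrtr1 ler_sqrt. Qed.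

Lemma vnorm_le_opnorm B x : vnorm2 x <= 1 -> vnorm (B *m x) <= opnorm B.
Proof.
move=> x1; apply: ub_le_sup; last by exists x => //=; rewrite vnorm_le1.
set K := \sum_j gram_eigval B j.
have K0 : 0 <= K by rewrite sumr_ge0 // => j _; apply: vnorm2_ge0.
exists (Num.sqrt K) => _ [v /= v1 <-]; rewrite vnormE ler_sqrt //.
by apply: le_trans (vnorm2_mulmx_le B v) _; rewrite ler_piMr // -vnorm_le1.
Qed.

Lemma opnorm_ge B x c : 0 <= c -> vnorm2 x <= 1 -> c ^+ 2 <= vnorm2 (B *m x) ->
  c <= opnorm B.
Proof.
move=> c0 x1 cx; apply: le_trans (vnorm_le_opnorm B x1); rewrite vnormE.
by rewrite -[c]ger0_norm // -sqrtr_sqr ler_sqrt // vnorm2_ge0.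
Qed.

Lemma opnorm_le B c : 0 <= c ->
  (forall v, vnorm2 (B *m v) <= c ^+ 2 * vnorm2 v) -> opnorm B <= c.
Proof.
move=> c0 Bc; apply: ge_sup.
  by exists (vnorm (B *m 0)), 0 => //=; rewrite vnorm_le1 vnorm2_0 ler01.
move=> _ [v /= v1 <-]; rewrite vnormE -[c]ger0_norm // -sqrtr_sqr ler_sqrt ?sqr_ge0 //.
by apply: le_trans (Bc v) _; rewrite ler_piMr ?sqr_ge0 // -vnorm_le1.
Qed.

Lemma opnorm_eq B c x : 0 <= c ->
  (forall v, vnorm2 (B *m v) <= c ^+ 2 * vnorm2 v) ->
  vnorm2 x <= 1 -> c ^+ 2 <= vnorm2 (B *m x) -> opnorm B = c.
Proof.
by move=> c0 Bc x1 cx; apply/le_anti; rewrite opnorm_le // (opnorm_ge c0 x1).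
Qed.

End OperatorNorm.

Lemma inf_image_min (R : realType) (T : Type) (S : set T) (f : T -> R) x0 :
  S x0 -> (forall x, S x -> f x0 <= f x) -> inf [set f x | x in S] = f x0.
Proof.
move=> Sx0 fx0_min; apply/le_anti/andP; split.
  apply: ge_inf; last by exists x0.
  by exists (f x0) => _ [x Sx <-]; apply: fx0_min.
apply: lb_le_inf; first by exists (f x0), x0.
by move=> _ [x Sx <-]; apply: fx0_min.
Qed.

Section DistanceToZeroOne.
Variable R : realFieldType.
Implicit Types x y p q : R.

(* For 0 <= x <= 1, [dist01 x] is the distance from x to {0, 1} and
   [round01 x] a nearest point. *)
Definition round01 x : R := if 1 <= 2 * x then 1 else 0.

Definition dist01 x : R := Order.min x (1 - x).

Lemma round01_idem x : round01 x * round01 x = round01 x.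
Proof. by rewrite /round01; case: ifP; rewrite ?mulr1 ?mulr0. Qed.

Lemma sqr_sub_round01 x : (x - round01 x) ^+ 2 = dist01 x ^+ 2.
Proof.
rewrite /round01 /dist01; case: ifP => [x_ge | /negbT x_lt].
  by rewrite min_r; [ring | lra].
by rewrite min_l; [ring | move: x_lt; rewrite -ltNge; lra].
Qed.

Lemma dist01_sub_sqr x : dist01 x - dist01 x ^+ 2 = x - x ^+ 2.
Proof. by rewrite /dist01; case: (leP x (1 - x)) => _; ring. Qed.

Lemma sub_sqr_ge0 x : 0 <= x <= 1 -> 0 <= x - x ^+ 2.
Proof. by move=> /andP[x0 x1]; nra. Qed.

Lemma dist01_ge0 x : 0 <= x <= 1 -> 0 <= dist01 x.
Proof. by move=> /andP[x0 x1]; rewrite le_min x0 subr_ge0. Qed.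

Lemma dist01_le_half x : 2 * dist01 x <= 1.
Proof. by rewrite /dist01; case: (leP x (1 - x)) => ?; lra. Qed.

Lemma dist01_sqr_le x p q : 0 <= p -> 0 <= q -> p + q = 1 ->
  dist01 x ^+ 2 <= x ^+ 2 * p + (1 - x) ^+ 2 * q.
Proof.
by move=> p0 q0 pq; rewrite /dist01; case: (leP x (1 - x)) => ?; nra.
Qed.

Lemma sub_sqr_le_dist01 x y : 0 <= x <= 1 -> dist01 x <= dist01 y ->
  x - x ^+ 2 <= dist01 y - dist01 y ^+ 2.
Proof.
move=> x01 le_xy; rewrite -dist01_sub_sqr.
have := dist01_ge0 x01; have := dist01_le_half y; nra.
Qed.

Lemma sqr_sub_round01_le x y : dist01 x <= dist01 y -> 0 <= dist01 x ->
  (x - round01 x) ^+ 2 <= dist01 y ^+ 2.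
Proof. by move=> le_xy x0; rewrite sqr_sub_round01; nra. Qed.

End DistanceToZeroOne.

Section AdjointBound.
Variables (R : realType) (n : nat).
Local Notation C := R[i].

Lemma vnorm2_trmxC_le (T : 'M[C]_n) K : 0 <= K ->
  (forall v, vnorm2 (T *m v) <= K * vnorm2 v) ->
  forall y, vnorm2 (T^t* *m y) <= K * vnorm2 y.
Proof.
move=> K0 TK y; set z := T^t* *m y; set N := vnorm2 z.
have yTz : dotc y (T *m z) = N%:C by rewrite dotc_mulmx vnorm2E.
have [K_eq0|K_neq0] := eqVneq K 0.
  have Tz0 : T *m z = 0.
    apply: vnorm2_eq0; apply/le_anti; rewrite vnorm2_ge0 andbT.
    by have := TK z; rewrite K_eq0 mul0r.
  by move: yTz; rewrite Tz0 dotc0r K_eq0 mul0r => /esym /complexI ->.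
have K_gt0 : 0 < K by rewrite lt_def K_neq0.
(* 0 <= |K y - T z|^2 = K^2 |y|^2 - 2 K N + |T z|^2 <= K (K |y|^2 - N) *)
have := vnorm2_ge0 (K%:C *: y - T *m z).
rewrite (vnorm2B_real (r := K * N)); last by rewrite dotcZl_real yTz rmorphM.
rewrite vnorm2Z => expand_ge0; have := TK z; rewrite -/N => TzN.
have : 0 <= K * (K * vnorm2 y - N) by nra.
by rewrite pmulr_rge0 // subr_ge0.
Qed.

End AdjointBound.

Section OffDiagonal.
Variables (R : realType) (n : nat).
Local Notation C := R[i].
Variables (P T : 'M[C]_n).
Hypotheses (P_proj : is_proj P) (PT0 : P *m T = 0) (TP : T *m P = T).

Lemma trmxC_mulmx_compl : T^t* *m (1%:M - P) = T^t*.
Proof.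
rewrite -[1%:M - P](proj_trmxC (proj_compl P_proj)) -trmxC_mul.
by rewrite mulmxBl mul1mx PT0 subr0.
Qed.

Lemma vnorm2_offdiag v : vnorm2 ((T^t* - T) *m v) =
  vnorm2 (T^t* *m ((1%:M - P) *m v)) + vnorm2 (T *m (P *m v)).
Proof.
rewrite !mulmxA trmxC_mulmx_compl TP mulmxBl vnorm2B_orth //.
have TT0 : T *m T = 0 by rewrite -{1}TP -mulmxA PT0 mulmx0.
by rewrite dotc_mulmxl trmxCK mulmxA TT0 mul0mx dotc0r.
Qed.

Lemma vnorm2_offdiag_le K : 0 <= K ->
  (forall v, vnorm2 (T *m v) <= K * vnorm2 v) ->
  forall v, vnorm2 ((T^t* - T) *m v) <= K * vnorm2 v.
Proof.
move=> K0 TK v; rewrite vnorm2_offdiag (vnorm2_proj_split v P_proj) mulrDr addrC.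
by apply: lerD; [exact: TK | exact: vnorm2_trmxC_le].
Qed.

Lemma vnorm2_offdiag_ge v : vnorm2 (T *m v) <= vnorm2 ((T^t* - T) *m v).
Proof. by rewrite vnorm2_offdiag [T *m (P *m v)]mulmxA TP lerDr vnorm2_ge0. Qed.

End OffDiagonal.

Lemma dist01_le_vnorm2_sub_proj (R : realType) (n : nat) (A Pt : 'M[R[i]]_n)
    (x : 'cV[R[i]]_n) (l : R) :
  is_proj Pt -> A *m x = l%:C *: x -> vnorm2 x = 1 ->
  dist01 l ^+ 2 <= vnorm2 ((A - Pt) *m x).
Proof.
move=> Pt_proj Ax x_unit; set x1 := Pt *m x; set x0 := (1%:M - Pt) *m x.
have -> : (A - Pt) *m x = l%:C *: x0 - (1 - l)%:C *: x1.
  rewrite mulmxBl Ax /x0 /x1 mulmxBl mul1mx scalerBr rmorphB rmorph1 /=.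
  by rewrite scalerBl scale1r opprB addrA subrK.
rewrite vnorm2B_orth; last first.
  rewrite dotcZl_real dotcZr /x0 dotc_mulmxl (proj_trmxC (proj_compl Pt_proj)).
  by rewrite mulmxA compl_mulmx_proj // mul0mx dotc0r !mulr0.
rewrite !vnorm2Z; apply: dist01_sqr_le; try exact: vnorm2_ge0.
by rewrite addrC -(vnorm2_proj_split x Pt_proj).
Qed.

Section ProjectorPair.
Variables (R : realType) (n : nat) (P Q : 'M[R[i]]_n).
Hypotheses (P_proj : is_proj P) (Q_proj : is_proj Q).

Let U := gram_basis (Q *m P).
Let lam := gram_eigval (Q *m P).
Let T := (1%:M - P) *m Q *m P.
Let U_unitary : U \is unitarymx := gram_basis_unitary (Q *m P).

Lemma PQP_udiag : P *m Q *m P = udiag U lam.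
Proof.
rewrite -gram_udiag trmxC_mul !proj_trmxC // mulmxA -[P *m Q *m Q]mulmxA.
by rewrite Q_proj.1.
Qed.

Lemma gram_corner : T^t* *m T = udiag U (fun j => lam j - lam j ^+ 2).
Proof.
suff -> : T^t* *m T = udiag U lam - udiag U lam *m udiag U lam.
  by rewrite udiag_mul // udiagB.
have Pc_proj := proj_compl P_proj.
rewrite -PQP_udiag /T !trmxC_mul !proj_trmxC //.
rewrite !mulmxA -[_ *m (1%:M - P) *m (1%:M - P)]mulmxA Pc_proj.1.
rewrite mulmxBr mulmx1 !mulmxBl -!mulmxA.
by rewrite [Q *m (Q *m _)]mulmxA Q_proj.1 [P *m (P *m _)]mulmxA P_proj.1.
Qed.

Lemma eigval_PQP01 j : 0 <= lam j <= 1.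
Proof.
have lam0 : 0 <= lam j := vnorm2_ge0 _.
have := vnorm2_ge0 (T *m ubasis U j).
by rewrite (vnorm2_gram_ubasis U_unitary j gram_corner) lam0 /=; nra.
Qed.

Lemma commutator_corner : commutator P Q = T^t* - T.
Proof.
have Pc_proj := proj_compl P_proj.
rewrite /commutator /T !trmxC_mul !proj_trmxC //.
rewrite !(mulmxBr, mulmxBl) mulmx1 mul1mx !mulmxA.
by rewrite opprB addrA subrK.
Qed.

Lemma P_mulmx_corner : P *m T = 0.
Proof. by rewrite /T !mulmxA proj_mulmx_compl // !mul0mx. Qed.

Lemma corner_mulmx_P : T *m P = T.
Proof. by rewrite /T -mulmxA P_proj.1. Qed.

Variable js : 'I_n.
Hypothesis js_max : forall j, dist01 (lam j) <= dist01 (lam js).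
Let d := dist01 (lam js).
Let Pt0 := udiag U (fun j => round01 (lam j)).

Lemma opnorm_PQP_sub_round : opnorm (P *m Q *m P - Pt0) <= d.
Proof.
apply: opnorm_le => [|v]; first exact: dist01_ge0 (eigval_PQP01 js).
apply: (vnorm2_gram_le U_unitary v (c := fun j => (lam j - round01 (lam j)) ^+ 2)).
  by rewrite PQP_udiag udiagB trmxC_udiag udiag_mul.
by move=> j; apply: sqr_sub_round01_le (js_max j) (dist01_ge0 (eigval_PQP01 j)).
Qed.

Lemma dist01_le_opnorm_PQP_sub Pt : is_proj Pt -> d <= opnorm (P *m Q *m P - Pt).
Proof.
move=> Pt_proj; have x_unit := vnorm2_ubasis U_unitary js.
apply: (opnorm_ge (x := ubasis U js) (dist01_ge0 (eigval_PQP01 js))).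
  by rewrite x_unit.
apply: dist01_le_vnorm2_sub_proj Pt_proj _ x_unit.
by rewrite PQP_udiag udiag_ubasis.
Qed.

Lemma fPQ_eq : fPQ P Q = d.
Proof.
have Pt0_proj : is_proj Pt0.
  by apply: is_proj_udiag => // j; apply: round01_idem.
rewrite /fPQ (@inf_image_min _ _ _ _ Pt0) => [|//|Pt Pt_proj].
  by apply/le_anti; rewrite opnorm_PQP_sub_round dist01_le_opnorm_PQP_sub.
exact: le_trans opnorm_PQP_sub_round (dist01_le_opnorm_PQP_sub Pt_proj).
Qed.

Lemma opnorm_commutator : opnorm (commutator P Q) = Num.sqrt (d - d ^+ 2).
Proof.
have h0 : 0 <= d - d ^+ 2 by rewrite dist01_sub_sqr; apply: sub_sqr_ge0 (eigval_PQP01 js).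
rewrite commutator_corner.
apply: (opnorm_eq (x := ubasis U js)); rewrite ?sqr_sqrtr ?sqrtr_ge0 //.
- apply: (vnorm2_offdiag_le P_proj P_mulmx_corner corner_mulmx_P h0).
  move=> v; apply: (vnorm2_gram_le U_unitary v gram_corner) => j.
  exact: sub_sqr_le_dist01 (eigval_PQP01 j) (js_max j).
- by rewrite vnorm2_ubasis.
rewrite dist01_sub_sqr -(vnorm2_gram_ubasis U_unitary js gram_corner).
exact: (vnorm2_offdiag_ge P_proj P_mulmx_corner corner_mulmx_P).
Qed.

End ProjectorPair.

Lemma exists_argmax (I : finType) (R : realDomainType) (i0 : I) (f : I -> R) :
  exists i, forall j, f j <= f i.
Proof.
by exists [arg max_(i > i0) f i]%O; case: arg_maxP => // i _ i_max j; apply: i_max.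
Qed.

Lemma opnorm_mx0 (R : realType) (B : 'M[R[i]]_0) : opnorm B = 0.
Proof.
have vnorm2_dim0 (v : 'cV[R[i]]_0) : vnorm2 v = 0 by rewrite /vnorm2 big_ord0.
by apply: (opnorm_eq (x := 0)) => [|v||]; rewrite ?vnorm2_dim0 ?expr2 ?mulr0 ?ler01.
Qed.

Lemma fPQ_mx0 (R : realType) (P Q : 'M[R[i]]_0) : fPQ P Q = 0.
Proof.
rewrite /fPQ (@inf_image_min _ _ _ _ 0) ?opnorm_mx0 // => [|Pt _].
  by split; apply/matrixP => [[]].
by rewrite !opnorm_mx0.
Qed.

Theorem lemma7 (R : realType) (n : nat) (P Q : 'M[R[i]]_n) :
  is_proj P -> is_proj Q ->
  opnorm (commutator P Q) = Num.sqrt (fPQ P Q - fPQ P Q ^+ 2).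
Proof.
case: n P Q => [|n] P Q P_proj Q_proj.
  by rewrite fPQ_mx0 opnorm_mx0 expr2 mulr0 subrr sqrtr0.
have [js js_max] := exists_argmax ord0 (fun j => dist01 (gram_eigval (Q *m P) j)).
by rewrite (fPQ_eq P_proj Q_proj js_max) (opnorm_commutator P_proj Q_proj js_max).
Qed.
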